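(* Let $M := \langle X \mid R\rangle$ where $R = \{(e,f)\}$ for some $e,f \in \langle X\rangle$, and let $d := ||e|-|f|| \in \mathbb{N}$. (1) If $d = 0$, then $M$ is half-factorial. (2) If $d \neq 0$, then $\Delta(M) = \{d\}$, and $\mathsf{L}_M(a)$ is an arithmetic progression with difference $d$ for all $a \in \langle X\rangle$.
   Context: For a set $X$, $\langle X\rangle$ is the free monoid on $X$ (identity $1$); $M=\langle X\mid R\rangle$ is the monoid presented by generators $X$ and relations $R\subseteq\langle X\rangle\times\langle X\rangle$. For $a,b\in\langle X\rangle$, $a=_M b$ means they have equal images in $M$; $|a|$ is word length. $\mathsf{L}_M(a) := \{|b| : b\in\langle X\rangle,\ b=_M a\}$ and $\mathcal{L}(M) := \{\mathsf{L}_M(a) : a\in\langle X\rangle\}$. $M$ is half-factorial if $\mathsf{L}_M(a) = \{|a|\}$ for all $a$. For $L\subseteq\mathbb{N}$, $d\in\mathbb{N}^+$ is a distance of $L$ if $[k,k+d]\cap L = \{k,k+d\}$ for some $k\in L$ (where $[n,m]$ is the set of integers between $n$ and $m$); $\Delta(L)$ is the set of distances of $L$, and $\Delta(M) := \bigcup_{L\in\mathcal{L}(M)}\Delta(L)$. (A singleton counts as an arithmetic progression with any difference.) *)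

(* Free monoid <X> = list X, concatenation ++, identity nil. *)
From Stdlib Require Import List Arith Lia.
Import ListNotations.

Inductive step {X : Type} (e f : list X) : list X -> list X -> Prop :=
| step_ef : forall u v, step e f (u ++ e ++ v) (u ++ f ++ v)
| step_fe : forall u v, step e f (u ++ f ++ v) (u ++ e ++ v).

(* a =_M b for M = <X | {(e,f)}>: the congruence generated by (e,f), i.e.
   the reflexive-transitive closure of the (symmetric) one-step relation. *)
Inductive eqM {X : Type} (e f : list X) : list X -> list X -> Prop :=
| eqM_refl : forall a, eqM e f a a
| eqM_step : forall a b c, step e f a b -> eqM e f b c -> eqM e f a c.

Definition Lset {X : Type} (e f : list X) (a : list X) : nat -> Prop :=
  fun n => exists b, eqM e f b a /\ length b = n.

Definition half_factorial {X : Type} (e f : list X) : Prop :=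
  forall a n, Lset e f a n <-> n = length a.

Definition is_distance (L : nat -> Prop) (d : nat) : Prop :=
  0 < d /\ exists k, L k /\ L (k + d) /\
    (forall j, k < j < k + d -> ~ L j).

Definition DeltaM {X : Type} (e f : list X) : nat -> Prop :=
  fun d => exists a, is_distance (Lset e f a) d.

(* L is an arithmetic progression with difference d:
   L = { m + k d : k ∈ N, k <= l } for some m and some l ∈ N ∪ {∞}
   (ub = None encodes an unbounded progression). *)
Definition is_AP (L : nat -> Prop) (d : nat) : Prop :=
  exists (m : nat) (ub : option nat), forall n,
    L n <-> exists k, n = m + k * d /\
      match ub with None => True | Some l => k <= l end.

(* Each rewriting step changes the length of a word by exactly
   d = ||e| - |f||.  Hence all words equal in M have lengths in one residue
   class mod d (a single length when d = 0), and along a chain of steps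
   from b to c no length of that class between |b| and |c| can be skipped.
   So every length set is a residue class cut down to an interval, i.e. an
   arithmetic progression with difference d; it has the distance d as soon
   as it has two elements, which L(e) does since it contains |e| and |f|. *)

From Stdlib Require Import List Arith.
From Stdlib Require Import Lia Classical Wf_nat.
Import ListNotations.

Definition mod_convex (L : nat -> Prop) (d : nat) : Prop :=
  (forall n1 n2, L n1 -> L n2 -> n1 mod d = n2 mod d) /\
  (forall n1 n2 n, L n1 -> L n2 -> n1 <= n <= n2 -> n mod d = n1 mod d -> L n).

Lemma mod_eq_near_eq (d a b : nat) :
  d <> 0 -> a mod d = b mod d -> a < b + d -> b < a + d -> a = b.
Proof.
  intros Hd Hab Ha Hb.
  pose proof (Nat.div_mod_eq a d). pose proof (Nat.div_mod_eq b d).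
  assert (a / d = b / d) by nia.
  lia.
Qed.

Lemma mod_eq_le_add_mul (d m n : nat) :
  d <> 0 -> n mod d = m mod d -> m <= n -> exists k, n = m + k * d.
Proof.
  intros Hd Hmod Hle. exists (n / d - m / d).
  pose proof (Nat.div_mod_eq n d). pose proof (Nat.div_mod_eq m d).
  rewrite Hmod in *.
  destruct (Nat.lt_ge_cases (n / d) (m / d)) as [Hq | Hq]; [| nia].
  exfalso. assert (d * S (n / d) <= d * (m / d)) by (apply Nat.mul_le_mono_l; lia).
  lia.
Qed.

Lemma nat_least (P : nat -> Prop) :
  (exists n, P n) -> exists m, P m /\ forall k, P k -> m <= k.
Proof.
  intros HP.
  destruct (dec_inh_nat_subset_has_unique_least_element P (fun n => classic (P n)) HP)
    as [m [[Pm Hm] _]].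
  now exists m.
Qed.

Lemma down_closed_cases (K : nat -> Prop) :
  (forall j k, j <= k -> K k -> K j) ->
  (forall k, K k) \/ exists N, forall k, K k <-> k < N.
Proof.
  intros Hdown.
  destruct (classic (forall k, K k)) as [Hall | Hnot]; [now left | right].
  destruct (nat_least (fun k => ~ K k)) as [N [HN Hmin]].
  { now apply not_all_ex_not. }
  exists N. intros k. split.
  - intros Kk. destruct (Nat.lt_ge_cases k N) as [|HNk]; auto.
    exfalso. exact (HN (Hdown N k HNk Kk)).
  - intros HkN. apply NNPP. intros Kk. specialize (Hmin k Kk). lia.
Qed.

Section ModConvex.

Variables (L : nat -> Prop) (d : nat).
Hypothesis (Hd : d <> 0) (HL : mod_convex L d).

Lemma mod_convex_is_AP : (exists n, L n) -> is_AP L d.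
Proof.
  intros Hne. destruct HL as [Hmod Hfill].
  destruct (nat_least L Hne) as [m [Lm Hmin]].
  (* Past the minimum m, L is the set of m + k d with k in a down-closed K. *)
  set (K k := L (m + k * d)).
  assert (HK : forall j k, j <= k -> K k -> K j).
  { intros j k Hjk Kk. apply (Hfill m (m + k * d)); auto.
    - nia.
    - now rewrite Nat.Div0.mod_add. }
  assert (HLK : forall n, L n <-> exists k, n = m + k * d /\ K k).
  { intros n. split.
    - intros Ln. destruct (mod_eq_le_add_mul d m n) as [k ->]; auto.
      exists k. split; [reflexivity | exact Ln].
    - now intros [k [-> Kk]]. }
  exists m. destruct (down_closed_cases K HK) as [Hall | [N HN]].
  - exists None. intros n. rewrite HLK. firstorder.
  - exists (Some (N - 1)). intros n. rewrite HLK.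
    assert (0 < N) by (apply HN; unfold K; now rewrite Nat.add_0_r).
    split; intros [k [-> Hk]]; exists k; split; auto.
    + apply HN in Hk. lia.
    + apply HN. lia.
Qed.

Lemma mod_convex_distance (n : nat) : is_distance L n -> n = d.
Proof.
  destruct HL as [Hmod Hfill].
  intros [Hn [k [Lk [Lkn Hgap]]]].
  destruct (lt_eq_lt_dec n d) as [[Hlt | Heq] | Hgt]; auto; exfalso.
  - assert (k = k + n) by (apply (mod_eq_near_eq d); auto; lia).
    lia.
  - apply (Hgap (k + d)); [lia |].
    apply (Hfill k (k + n)); auto; [lia |].
    replace (k + d) with (k + 1 * d) by lia.
    apply Nat.Div0.mod_add.
Qed.

Lemma mod_convex_is_distance (k : nat) : L k -> L (k + d) -> is_distance L d.
Proof.
  destruct HL as [Hmod _].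
  intros Lk Lkd. split; [lia |].
  exists k. repeat split; auto.
  intros j Hj Lj.
  assert (j = k) by (apply (mod_eq_near_eq d); auto; lia).
  lia.
Qed.

End ModConvex.

Section OneRelator.

Context {X : Type} (e f : list X).
Let d := length e - length f + (length f - length e).

Lemma step_length x y :
  step e f x y -> length y = length x + d \/ length x = length y + d.
Proof. intros []; rewrite !length_app; unfold d; lia. Qed.

Lemma eqM_trans x y z : eqM e f x y -> eqM e f y z -> eqM e f x z.
Proof. induction 1; intros; auto. econstructor; eauto. Qed.

Lemma step_sym x y : step e f x y -> step e f y x.
Proof. intros []; constructor. Qed.

Lemma eqM_sym x y : eqM e f x y -> eqM e f y x.
Proof.
  induction 1 as [| a b c Hab _ IH]; [constructor |].
  apply (eqM_trans _ b); auto.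
  econstructor; [apply step_sym; eassumption | constructor].
Qed.

Lemma eqM_length_mod x y : eqM e f x y -> length x mod d = length y mod d.
Proof.
  induction 1 as [| a b c Hab _ IH]; auto.
  rewrite <- IH.
  destruct (step_length _ _ Hab) as [-> | ->];
    [symmetry |]; rewrite <- (Nat.mul_1_l d) at 1; apply Nat.Div0.mod_add.
Qed.

(* Steps move the length by exactly d, so a length of the right residue
   class between the two ends cannot be jumped over. *)
Lemma eqM_length_between b c n :
  d <> 0 -> eqM e f b c ->
  (length b <= n <= length c \/ length c <= n <= length b) ->
  n mod d = length c mod d -> exists w, eqM e f w c /\ length w = n.
Proof.
  intros Hd H. induction H as [a | a b c Hab Hbc IH]; intros Hn Hmod.
  - exists a. split; [constructor | lia].
  - destruct (Nat.eq_dec n (length a)) as [-> | Hna].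
    + exists a. split; [econstructor; eauto | reflexivity].
    + pose proof (step_length _ _ Hab) as Hstep.
      assert (Hb : length b <= n <= length c \/ length c <= n <= length b
                   \/ (n < length a + d /\ length a < n + d)) by lia.
      destruct Hb as [Hb | [Hb | [Hlo Hhi]]]; auto.
      exfalso. apply Hna, (mod_eq_near_eq d); auto.
      rewrite Hmod. symmetry. apply eqM_length_mod. econstructor; eauto.
Qed.

Lemma Lset_self a : Lset e f a (length a).
Proof. exists a. split; [constructor | reflexivity]. Qed.

Lemma Lset_relator : Lset e f e (length f).
Proof.
  exists f. split; [| reflexivity].
  econstructor; [| constructor].
  pose proof (step_fe e f [] []) as Hfe.
  now rewrite !app_nil_r in Hfe.
Qed.

Lemma Lset_mod_convex a : d <> 0 -> mod_convex (Lset e f a) d.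
Proof.
  intros Hd. split.
  - intros n1 n2 [b1 [Hb1 <-]] [b2 [Hb2 <-]].
    apply eqM_length_mod, (eqM_trans _ a); auto using eqM_sym.
  - intros n1 n2 n [b1 [Hb1 <-]] [b2 [Hb2 <-]] Hn Hmod.
    destruct (eqM_length_between b1 b2 n Hd) as [w [Hw <-]].
    + apply (eqM_trans _ a); auto using eqM_sym.
    + lia.
    + rewrite Hmod. apply eqM_length_mod, (eqM_trans _ a); auto using eqM_sym.
    + exists w. split; [apply (eqM_trans _ b2) |]; auto.
Qed.

Lemma Lset_relator_distance : d <> 0 -> is_distance (Lset e f e) d.
Proof.
  intros Hd. pose proof (Lset_mod_convex e Hd) as Hconv.
  destruct (Nat.le_ge_cases (length e) (length f)).
  - apply (mod_convex_is_distance _ _ Hd Hconv (length e)); [apply Lset_self |].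
    replace (length e + d) with (length f) by (unfold d; lia).
    apply Lset_relator.
  - apply (mod_convex_is_distance _ _ Hd Hconv (length f)); [apply Lset_relator |].
    replace (length f + d) with (length e) by (unfold d; lia).
    apply Lset_self.
Qed.

End OneRelator.

Theorem proposition4p1 (X : Type) (e f : list X) :
  let d := (length e - length f) + (length f - length e) in
  (d = 0 -> half_factorial e f) /\
  (d <> 0 ->
     (forall n, DeltaM e f n <-> n = d) /\
     (forall a : list X, is_AP (Lset e f a) d)).
Proof.
  intros d. split.
  - intros Hd a n. split.
    + intros [b [Hb <-]].
      pose proof (eqM_length_mod e f b a Hb) as Hlen.
      fold d in Hlen. now rewrite Hd, !Nat.mod_0_r in Hlen.
    + intros ->. apply Lset_self.
  - intros Hd. split.
    + intros n. split.
      * intros [a Ha]. exact (mod_convex_distance _ _ Hd (Lset_mod_convex e f a Hd) n Ha).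
      * intros ->. exists e. exact (Lset_relator_distance e f Hd).
    + intros a. apply (mod_convex_is_AP _ _ Hd (Lset_mod_convex e f a Hd)).
      exists (length a). apply Lset_self.
Qed.
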